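(* Let $L=L(m,n;k,l)$ be an $L$-shaped supergrid graph. Then $L$ contains a Hamiltonian cycle if and only if $L$ has no vertex of degree $1$.
   Context: The infinite supergrid graph has as vertices all points $(x,y)\in\mathbb{Z}^2$, two distinct vertices $u=(u_x,u_y)$, $v=(v_x,v_y)$ being adjacent iff $|u_x-v_x|\le 1$ and $|u_y-v_y|\le 1$. A supergrid graph is a finite vertex-induced subgraph of it. For integers $m,n>1$ and $k,l\ge 1$ with $m-k\ge 1$ and $n-l\ge 1$, the $L$-shaped supergrid graph $L(m,n;k,l)$ is the supergrid graph induced by the vertex set $\{(x,y):1\le x\le m,\ 1\le y\le n\}\setminus\{(x,y): m-k+1\le x\le m,\ 1\le y\le l\}$ (i.e. the rectangle $R(m,n)$ with an $k\times l$ block removed from its upper-right corner, where $(1,1)$ is the upper-left corner and $y$ increases downward). A cycle is a closed simple path on at least $3$ distinct vertices. *)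

From mathcomp Require Import all_boot.
Set Implicit Arguments. Unset Strict Implicit. Unset Printing Implicit Defensive.

(* Vertices of the infinite supergrid: points of Z^2; every vertex of an
   L-shaped supergrid graph has positive coordinates, so we use nat * nat. *)
Definition vertex := (nat * nat)%type.

Definition close1 (a b : nat) : bool := (a <= b.+1) && (b <= a.+1).

Definition sg_adj (u v : vertex) : bool :=
  (u != v) && close1 u.1 v.1 && close1 u.2 v.2.

(* vertex set of L(m,n;k,l): R(m,n) minus the k x l block in the upper-right corner *)
Definition inL (m n k l : nat) (v : vertex) : bool :=
  [&& 1 <= v.1 <= m, 1 <= v.2 <= n &
      ~~ ((m - k + 1 <= v.1 <= m) && (1 <= v.2 <= l))].

Definition Lverts (m n k l : nat) : seq vertex :=
  [seq v <- [seq (x, y) | x <- iota 1 m, y <- iota 1 n] | inL m n k l v].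

Definition Ldeg (m n k l : nat) (v : vertex) : nat :=
  count (sg_adj v) (Lverts m n k l).

Definition has_ham_cycle (m n k l : nat) : Prop :=
  exists c : seq vertex,
    [/\ uniq c, 3 <= size c, cycle sg_adj c &
        forall v, (v \in c) = inL m n k l v].

(* A Hamiltonian cycle enters and leaves each vertex through two distinct neighbours,
   so no vertex can have degree 1.  Conversely, let a = m - k and b = n - l be the
   widths of the two arms.  The corners (1,1) and (m,n) have degree 1 exactly when
   a = 1 < l or b = 1 < k; otherwise a Hamiltonian cycle is built by induction on
   m + n.  Two rows added below the graph, or two columns added to the right of its
   lower arm, are absorbed by replacing one boundary edge of the old cycle by a
   U-turn through the new strip of width 2; the reflection in the anti-diagonal
   exchanges the two arms and so yields the two other reductions; sixteen small
   graphs with k, l <= 2 and arms at most 3 wide are checked by computation.  For the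
   induction to go through, the cycles must keep the boundary edges that the U-turns
   replace. *)

From mathcomp Require Import all_boot zify.
Set Implicit Arguments. Unset Strict Implicit. Unset Printing Implicit Defensive.

Section Links.
Variable T : eqType.
Implicit Types (s : seq T) (u w x y : T).

Definition link s u w : bool := infix [:: u; w] s || infix [:: w; u] s.

Lemma linkC s u w : link s u w = link s w u.
Proof. by rewrite /link orbC. Qed.

Lemma link_rev s u w : link (rev s) u w = link s u w.
Proof. by rewrite /link -!infix_revLR orbC. Qed.

Lemma link_infix s1 s2 u w : infix s1 s2 -> link s1 u w -> link s2 u w.
Proof. by move=> s12 /orP[] H; rewrite /link (infix_trans H s12) ?orbT. Qed.

Lemma link_pairE x y u w :
  link [:: x; y] u w = (u == x) && (w == y) || (u == y) && (w == x).
Proof. by rewrite /link /= !andbT !andbF !orbF [(w == x) && _]andbC. Qed.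

Lemma infix_pair_cat u w s1 x y s2 :
  infix [:: u; w] (rcons s1 x ++ y :: s2) ->
  [\/ infix [:: u; w] (rcons s1 x), infix [:: u; w] (y :: s2) | (u, w) = (x, y)].
Proof.
elim: s1 => [|a s1 IH].
  rewrite infix_consl => /orP[/and3P[/eqP-> /eqP-> _]|]; [exact: Or33|exact: Or32].
rewrite rcons_cons cat_cons infix_consl => /orP[|/IH[H|H|H]].
- case: s1 {IH} => [|b s1] /= /andP[/eqP-> /andP[/eqP-> _]]; apply: Or31;
  by rewrite !eqxx ?prefix0s.
- by apply: Or31; rewrite infix_consl H orbT.
- exact: Or32.
- exact: Or33.
Qed.

End Links.

Lemma link_map (T T' : eqType) (f : T -> T') s u w :
  link s u w -> link (map f s) (f u) (f w).
Proof.
by case/orP=> /infixP[p [q ->]]; apply/orP; [left|right];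
  apply/infixP; exists (map f p), (map f q); rewrite !map_cat.
Qed.

Section SymmetricCycles.
Variables (T : eqType) (e : rel T).
Hypothesis e_sym : symmetric e.
Implicit Types (c p q : seq T) (x y : T).

Lemma cycle_splice p1 x y p2 q :
  cycle e (rcons p1 x ++ y :: p2) -> path e x (rcons q y) ->
  cycle e (rcons p1 x ++ q ++ y :: p2).
Proof.
rewrite -(rot_cycle (size (rcons p1 x))) rot_size_cat /=.
rewrite rcons_cat cat_path rcons_path last_rcons => /and3P[P2 P1 _] Pq.
rewrite catA -(rot_cycle (size (rcons p1 x ++ q))) rot_size_cat /=.
by rewrite !rcons_cat !cat_path last_rcons P2 P1.
Qed.

Lemma cycle_insert_path c x y q :
  uniq (q ++ c) -> cycle e c -> link c x y -> path e x (rcons q y) ->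
  exists c', [/\ perm_eq c' (q ++ c), cycle e c',
    forall u w, link c u w -> ~~ link [:: x; y] u w -> link c' u w &
    forall u w, link (x :: rcons q y) u w -> link c' u w].
Proof.
move=> Uqc Cc cxy Pq; wlog /infixP[p1 [p2 Ec]] : c Uqc Cc {cxy} / infix [:: x; y] c.
  move=> W; case/orP: cxy => [|yx]; first exact: W.
  have Urev : uniq (q ++ rev c) by rewrite (perm_uniq (s2 := q ++ c)) ?perm_cat2l ?perm_rev.
  have Crev : cycle e (rev c).
    by rewrite rev_cycle (eq_cycle (e' := e)) // => u w; apply: e_sym.
  have xy_rev : infix [:: x; y] (rev c) by rewrite -infix_revLR.
  have [c' [Pc' Cc' keep new]] := W (rev c) Urev Crev xy_rev.
  exists c'; split=> // [|u w]; first by rewrite (perm_trans Pc') ?perm_cat2l ?perm_rev.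
  by rewrite -link_rev; apply: keep.
have {}Ec : c = rcons p1 x ++ y :: p2 by rewrite Ec -cats1 -catA.
exists (rcons p1 x ++ q ++ y :: p2); split.
- by rewrite Ec perm_catCA.
- by apply: cycle_splice; rewrite -?Ec.
- have keep u w : infix [:: u; w] c -> ~~ link [:: x; y] u w ->
      infix [:: u; w] (rcons p1 x ++ q ++ y :: p2).
    rewrite Ec => /infix_pair_cat[H|H|[-> ->]]; last by rewrite link_pairE !eqxx.
    + by move=> _; apply: infix_catr.
    + by move=> _; rewrite catA; apply: infix_catl.
  move=> u w /orP[H|H] nxy; apply/orP; [left|right]; apply: keep H _ => //.
  by rewrite linkC.
- move=> u w; apply: link_infix; apply/infixP; exists p1, p2.
  by rewrite -cats1 -!catA /= -cats1 -catA.
Qed.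

Lemma cycle_count_adj c v :
  cycle e c -> 2 < size c -> v \in c -> 1 < count (e v) c.
Proof.
move=> + + /rot_to[i s Ec].
have /permP-> : perm_eq c (rot i c) by rewrite perm_sym perm_rot.
rewrite -(rot_cycle i) -(size_rot i) Ec.
case: s {Ec} => [|a s] //; case/lastP: s => [|s z] //= /andP[eva].
rewrite rcons_path last_rcons e_sym -cats1 count_cat /= eva => /andP[_ ->].
by rewrite addn1 ltnS addnC addnS.
Qed.

End SymmetricCycles.

Lemma path_iota (r : rel nat) i n :
  (forall j, i <= j < i + n -> r j j.+1) -> path r i (iota i.+1 n).
Proof.
elim: n i => [|n IH] i rS //=.
rewrite rS ?IH //; [move=> j ij; apply: rS|]; lia.
Qed.

Section Walks.
Variables (T : eqType) (g : nat -> T) (N : nat).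

Lemma rcons_map_iota : rcons (map g (iota 1 N)) (g N.+1) = map g (iota 1 N.+1).
Proof. by rewrite -map_rcons -cats1 -[N.+1]add1n -(iotaD 1 N 1) addn1. Qed.

Lemma path_walk (e : rel T) : (forall i, i <= N -> e (g i) (g i.+1)) ->
  path e (g 0) (rcons (map g (iota 1 N)) (g N.+1)).
Proof.
move=> gS; rewrite rcons_map_iota path_map.
by apply: path_iota => j /andP[_]; rewrite add0n ltnS; apply: gS.
Qed.

Lemma link_walk i : i <= N ->
  link (g 0 :: rcons (map g (iota 1 N)) (g N.+1)) (g i) (g i.+1).
Proof.
move=> iN; rewrite rcons_map_iota -[_ :: _]/(map g (iota 0 N.+2)).
apply: (@link_infix _ [:: g i; g i.+1]); last by rewrite link_pairE !eqxx.
apply/infixP; exists (map g (iota 0 i)), (map g (iota i.+2 (N - i))).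
have -> : N.+2 = i + (N - i).+2 by lia.
by rewrite iotaD map_cat add0n.
Qed.

End Walks.

Lemma sg_adj_sym : symmetric sg_adj.
Proof. by move=> u v; rewrite /sg_adj /close1 eq_sym; lia. Qed.

Definition is_ham_cycle (V : pred vertex) (c : seq vertex) :=
  [/\ uniq c, 3 <= size c, cycle sg_adj c & forall v, (v \in c) = V v].

Lemma Lverts_mem m n k l v : (v \in Lverts m n k l) = inL m n k l v.
Proof.
rewrite mem_filter; case Lv: (inL m n k l v) => //=.
case: v Lv => x y; rewrite /inL /= => Lxy.
by apply: (allpairs_f (fun x y => (x, y))); rewrite mem_iota; lia.
Qed.

Lemma Lverts_uniq m n k l : uniq (Lverts m n k l).
Proof.
by apply/filter_uniq/allpairs_uniq; rewrite ?iota_uniq // => -[x y] [x' y'] _ _ /=.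
Qed.

Definition ham_cycleb m n k l c : bool :=
  [&& uniq c, 2 < size c, cycle sg_adj c, all (inL m n k l) c & all (mem c) (Lverts m n k l)].

Lemma ham_cycleP m n k l c :
  reflect (is_ham_cycle (inL m n k l) c) (ham_cycleb m n k l c).
Proof.
apply: (iffP and5P) => [[Uc Sc Cc /allP cL /allP Lc]|[Uc Sc Cc Mc]]; split=> //.
- by move=> v; apply/idP/idP => [/cL|Lv]; last by apply: Lc; rewrite Lverts_mem.
- by apply/allP => v; rewrite -Mc.
- by apply/allP => v; rewrite Lverts_mem -Mc.
Qed.

Lemma ham_cycle_detour (V V' : pred vertex) c (g : nat -> vertex) N :
  is_ham_cycle V c -> link c (g 0) (g N.+1) ->
  (forall i, i <= N -> sg_adj (g i) (g i.+1)) ->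
  {in [pred i | 0 < i <= N] &, injective g} ->
  (forall i, 0 < i <= N -> ~~ V (g i) && V' (g i)) ->
  (forall v, V v -> V' v) ->
  (forall v, V' v -> ~~ V v -> exists2 i, 0 < i <= N & v = g i) ->
  exists c', [/\ is_ham_cycle V' c',
    forall u w, link c u w -> ~~ link [:: g 0; g N.+1] u w -> link c' u w &
    forall i, i <= N -> link c' (g i) (g i.+1)].
Proof.
move=> [Uc Sc Cc Mc] cg gS g_inj g_new V'V V'new.
set q := map g (iota 1 N).
have Mq v : reflect (exists2 i, 0 < i <= N & v = g i) (v \in q).
  apply: (iffP mapP) => -[i Hi ->]; exists i => //; move: Hi; rewrite mem_iota; lia.
have Uqc : uniq (q ++ c).
  rewrite cat_uniq Uc map_inj_in_uniq ?iota_uniq /=; last first.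
    by move=> i j; rewrite !mem_iota => Hi Hj; apply: g_inj; rewrite inE; lia.
  rewrite andbT; apply/hasPn => v; rewrite Mc => Vv.
  by apply/Mq => -[i /g_new/andP[gV _] vg]; rewrite -vg Vv in gV.
have [c' [Pc' Cc' keep new]] := cycle_insert_path sg_adj_sym Uqc Cc cg (path_walk gS).
exists c'; split=> [|//|i iN]; last exact/new/link_walk.
split=> [||//|v]; first by rewrite (perm_uniq Pc').
  by rewrite (perm_size Pc') size_cat (leq_trans Sc) ?leq_addl.
rewrite (perm_mem Pc') mem_cat Mc.
apply/idP/idP => [/orP[/Mq[i /g_new/andP[_ ?] ->]|/V'V]//|].
by case Vv: (V v) => V'v; rewrite ?orbT //; apply/orP; left; apply/Mq/V'new; rewrite ?Vv.
Qed.

(* The row detour replaces the edge (1,n)-(2,n), the column detour the edge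
   (m,n-1)-(m,n), and [flip] exchanges these with (1,n-1)-(1,n) and (1,1)-(2,1). *)
Definition corner_links m n k l (c : seq vertex) : bool :=
  [&& link c (1, n.-1) (1, n), link c (1, n) (2, n),
      (k.+2 <= m) ==> link c (1, 1) (2, 1) & (l.+2 <= n) ==> link c (m, n.-1) (m, n)].

Definition good_ham m n k l : Prop :=
  exists2 c, is_ham_cycle (inL m n k l) c & corner_links m n k l c.

(* A walk through a strip of width 2 and length len, in coordinates (position along
   the strip, distance from the old graph): from (1,0) it crosses to the far line,
   runs along it, comes back along the near line and ends at (2,0). *)
Definition uturn (len i : nat) : nat * nat :=
  if i == 0 then (1, 0) else if i == 1 then (1, 1)
  else if i <= len.+1 then (i.-1, 2)
  else if i <= 2 * len then (2 * len + 2 - i, 1) else (2, 0).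

Ltac grid_arith := try apply/eqP; rewrite ?/uturn /=;
  repeat (match goal with |- context [if ?b then _ else _] => case: ifP => ? end);
  rewrite ?/sg_adj ?/close1 ?/inL /= ?xpair_eqE; lia.

Definition row_detour m n i : vertex := ((uturn m i).1, n + (uturn m i).2).

Lemma good_ham_addrows m n k l :
  0 < k < m -> 0 < l < n -> good_ham m n k l -> good_ham m n.+2 k l.
Proof.
move=> km ln [c Hc /and4P[L1 L2 L3 L4]].
pose g := row_detour m n.
have [g0 gN] : g 0 = (1, n) /\ g (2 * m).+1 = (2, n).
  by split; rewrite /g /row_detour; grid_arith.
have [g1 g2 g3 gm1 gm2] : [/\ g 1 = (1, n.+1), g 2 = (1, n.+2), g 3 = (2, n.+2),
    g m.+1 = (m, n.+2) & g m.+2 = (m, n.+1)].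
  by split; rewrite /g /row_detour; grid_arith.
have gS i : i <= 2 * m -> sg_adj (g i) (g i.+1) by rewrite /g /row_detour; grid_arith.
have [|||||c' [Hc' keep new]] := ham_cycle_detour (V' := inL m n.+2 k l) Hc _ gS.
- by rewrite g0 gN.
- by move=> i j; rewrite !inE /g /row_detour => ? ? /eqP; grid_arith.
- by move=> i iN; rewrite /g /row_detour; grid_arith.
- by case=> x y; grid_arith.
- move=> [x y]; rewrite /inL /= => Lxy Lxy'.
  exists (if y == n.+2 then x.+1 else if x == 1 then 1 else 2 * m + 2 - x);
    (case: ifP => ?; [|case: ifP => ?]); rewrite /g /row_detour; grid_arith.
exists c' => //; apply/and4P; split.
- by rewrite -g1 -g2; apply: new; lia.
- by rewrite -g2 -g3; apply: new; lia.
- by apply/implyP => /(implyP L3) /keep; apply; rewrite g0 gN link_pairE; grid_arith.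
- by apply/implyP => _; rewrite linkC -gm1 -gm2; apply: new; lia.
Qed.

Definition col_detour m n l i : vertex :=
  (m + (uturn (n - l) i).2, n.+1 - (uturn (n - l) i).1).

Lemma good_ham_addcols m n k l :
  0 < k < m -> 0 < l -> l.+2 <= n -> good_ham m n k l -> good_ham m.+2 n k.+2 l.
Proof.
move=> km l0 ln [c Hc /and4P[L1 L2 L3 L4]].
pose g := col_detour m n l.
have [g0 gN] : g 0 = (m, n) /\ g (2 * (n - l)).+1 = (m, n.-1).
  by split; rewrite /g /col_detour; grid_arith.
have [g2 g3] : g 2 = (m.+2, n) /\ g 3 = (m.+2, n.-1).
  by split; rewrite /g /col_detour; grid_arith.
have gS i : i <= 2 * (n - l) -> sg_adj (g i) (g i.+1).
  by rewrite /g /col_detour; grid_arith.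
have [|||||c' [Hc' keep new]] := ham_cycle_detour (V' := inL m.+2 n k.+2 l) Hc _ gS.
- by rewrite g0 gN linkC; apply: (implyP L4).
- by move=> i j; rewrite !inE /g /col_detour => ? ? /eqP; grid_arith.
- by move=> i iN; rewrite /g /col_detour; grid_arith.
- by case=> x y; grid_arith.
- move=> [x y]; rewrite /inL /= => Lxy Lxy'.
  exists (if x == m.+2 then n.+2 - y else if y == n then 1 else y + 2 * (n - l) + 1 - n);
    (case: ifP => ?; [|case: ifP => ?]); rewrite /g /col_detour; grid_arith.
have kept u w : link c u w -> ~~ link [:: (m, n); (m, n.-1)] u w -> link c' u w.
  by rewrite -g0 -gN; apply: keep.
exists c' => //; apply/and4P; split.
- by apply: kept L1 _; rewrite link_pairE; grid_arith.
- by apply: kept L2 _; rewrite link_pairE; grid_arith.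
- by apply/implyP => /(implyP L3) /kept; apply; rewrite link_pairE; grid_arith.
- by apply/implyP => _; rewrite linkC -g2 -g3; apply: new; lia.
Qed.

(* The reflection in the anti-diagonal, which keeps the notch in the upper-right corner. *)
Definition flip m n (v : vertex) : vertex := (n.+1 - v.2, m.+1 - v.1).

Lemma flip_inL m n k l v : inL m n k l v -> inL n m l k (flip m n v).
Proof. by case: v => x y; rewrite /flip; grid_arith. Qed.

Lemma flipK m n k l v : inL m n k l v -> flip n m (flip m n v) = v.
Proof. by case: v => x y; rewrite /flip /inL /= => ?; grid_arith. Qed.

Lemma flip_adj m n k l : {in inL m n k l &, {mono flip m n : u w / sg_adj u w}}.
Proof.
by move=> [x y] [x' y']; rewrite -!topredE /flip /inL /= => ? ?; apply/idP/idP; grid_arith.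
Qed.

Lemma good_ham_flip m n k l : l < n -> good_ham m n k l -> good_ham n m l k.
Proof.
move=> ln [c [Uc Sc Cc Mc] /and4P[L1 L2 L3 L4]].
have cL : {subset c <= inL m n k l} by move=> v; rewrite Mc.
have flip_link u w u' w' :
  link c u w -> flip m n u = u' -> flip m n w = w' -> link (map (flip m n) c) u' w'.
  by move=> /(link_map (flip m n)) + <- <-.
exists (map (flip m n) c); first split.
- by rewrite map_inj_in_uniq // => u w /cL Lu /cL Lw; apply: (can_in_inj (@flipK m n k l)).
- by rewrite size_map.
- by rewrite (mono_cycle_in (@flip_adj m n k l)) //; apply/allP.
- move=> v; apply/mapP/idP => [[u /cL Lu ->]|Lv]; first exact: flip_inL.
  by exists (flip n m v); rewrite ?Mc ?flip_inL // (flipK Lv).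
apply/and4P; split.
- by rewrite linkC; apply: flip_link L2 _ _; rewrite /flip; grid_arith.
- by rewrite linkC; apply: flip_link L1 _ _; rewrite /flip; grid_arith.
- apply/implyP => /(implyP L4) L4'; rewrite linkC.
  by apply: flip_link L4' _ _; rewrite /flip; grid_arith.
- apply/implyP => /(implyP L3) L3'; rewrite linkC.
  by apply: flip_link L3' _ _; rewrite /flip; grid_arith.
Qed.

Definition base_cycle m n k l : seq vertex :=
  match m, n, k, l with
  | 2, 2, 1, 1 => [:: (2,2); (1,2); (1,1)]
  | 2, 3, 1, 1 => [:: (1,1); (2,2); (2,3); (1,3); (1,2)]
  | 3, 2, 1, 1 => [:: (3,2); (2,2); (1,2); (1,1); (2,1)]
  | 3, 3, 1, 1 => [:: (1,1); (2,1); (2,2); (3,2); (3,3); (2,3); (1,3); (1,2)]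
  | 3, 3, 1, 2 => [:: (1,1); (2,1); (2,2); (3,3); (2,3); (1,3); (1,2)]
  | 3, 4, 1, 2 => [:: (1,2); (1,1); (2,1); (2,2); (2,3); (3,3); (3,4); (2,4); (1,4);
                      (1,3)]
  | 4, 3, 1, 2 => [:: (1,1); (2,1); (2,2); (3,1); (3,2); (4,3); (3,3); (2,3); (1,3);
                      (1,2)]
  | 4, 4, 1, 2 => [:: (1,2); (1,1); (2,1); (2,2); (3,1); (3,2); (2,3); (3,3); (4,3);
                      (4,4); (3,4); (2,4); (1,4); (1,3)]
  | 3, 3, 2, 1 => [:: (1,1); (2,2); (3,2); (3,3); (2,3); (1,3); (1,2)]
  | 3, 4, 2, 1 => [:: (1,2); (1,1); (2,2); (2,3); (3,2); (3,3); (3,4); (2,4); (1,4);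
                      (1,3)]
  | 4, 3, 2, 1 => [:: (1,1); (2,1); (2,2); (3,2); (4,2); (4,3); (3,3); (2,3); (1,3);
                      (1,2)]
  | 4, 4, 2, 1 => [:: (1,2); (1,1); (2,1); (2,2); (2,3); (3,2); (3,3); (4,2); (4,3);
                      (4,4); (3,4); (2,4); (1,4); (1,3)]
  | 4, 4, 2, 2 => [:: (1,2); (1,1); (2,1); (2,2); (2,3); (3,3); (4,3); (4,4); (3,4);
                      (2,4); (1,4); (1,3)]
  | 4, 5, 2, 2 => [:: (1,3); (1,2); (1,1); (2,1); (2,2); (2,3); (2,4); (3,3); (3,4);
                      (4,3); (4,4); (4,5); (3,5); (2,5); (1,5); (1,4)]
  | 5, 4, 2, 2 => [:: (1,2); (1,1); (2,1); (2,2); (3,1); (3,2); (2,3); (3,3); (4,3);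
                      (5,3); (5,4); (4,4); (3,4); (2,4); (1,4); (1,3)]
  | 5, 5, 2, 2 => [:: (1,3); (1,2); (1,1); (2,1); (2,2); (3,1); (3,2); (2,3); (2,4);
                      (3,3); (3,4); (4,3); (4,4); (5,3); (5,4); (5,5); (4,5); (3,5);
                      (2,5); (1,5); (1,4)]
  | _, _, _, _ => [::]
  end.

Lemma good_ham_base_cycle m n k l (c := base_cycle m n k l) :
  ham_cycleb m n k l c && corner_links m n k l c -> good_ham m n k l.
Proof. by case/andP=> /ham_cycleP; exists c. Qed.

Lemma good_ham_base m n k l :
  0 < k <= 2 -> 0 < l <= 2 -> k < m <= k + 3 -> l < n <= l + 3 ->
  (m = k.+1 -> l = 1) -> (n = l.+1 -> k = 1) -> (m = k + 3 -> l = 2) -> (n = l + 3 -> k = 2) ->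
  good_ham m n k l.
Proof.
move=> *; have : [&& k \in [:: 1; 2], l \in [:: 1; 2],
  m \in [:: 2; 3; 4; 5] & n \in [:: 2; 3; 4; 5]] by rewrite !inE; lia.
rewrite !inE => /and4P[/orP[]/eqP? /orP[]/eqP? /or4P[]/eqP? /or4P[]/eqP?]; subst;
  first [lia | by apply: good_ham_base_cycle; vm_compute].
Qed.

Lemma good_ham_all m n k l :
  0 < k < m -> 0 < l < n -> (m = k.+1 -> l = 1) -> (n = l.+1 -> k = 1) -> good_ham m n k l.
Proof.
have [s] := ubnP (m + n); elim: s m n k l => // s IH m n k l mns km ln hm hn.
have flipped : good_ham n m l k -> good_ham m n k l by apply: good_ham_flip; lia.
case: (leqP 3 k) => [k3|k2].
  have [-> ->] : m = (m - 2).+2 /\ k = (k - 2).+2 by lia.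
  by apply: good_ham_addcols; [lia|lia|lia|apply: IH; lia].
case: (leqP 3 l) => [l3|l2].
  apply: flipped; have [-> ->] : n = (n - 2).+2 /\ l = (l - 2).+2 by lia.
  apply: good_ham_addcols; [lia|lia|lia|apply: good_ham_flip; [lia|apply: IH; lia]].
(* An arm may shrink to width 1 only if its corner keeps degree 2. *)
case: (boolP ((l + 3 < n) || (n == l + 3) && (k == 1))) => [nl|nl].
  have -> : n = (n - 2).+2 by lia.
  by apply: good_ham_addrows; [lia|lia|apply: IH; lia].
case: (boolP ((k + 3 < m) || (m == k + 3) && (l == 1))) => [mk|mk].
  apply: flipped; have -> : m = (m - 2).+2 by lia.
  apply: good_ham_addrows; [lia|lia|apply: good_ham_flip; [lia|apply: IH; lia]].
by apply: good_ham_base; lia.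
Qed.

Lemma Ldeg_ham_cycle m n k l c v :
  is_ham_cycle (inL m n k l) c -> inL m n k l v -> 1 < Ldeg m n k l v.
Proof.
case=> Uc Sc Cc Mc Lv; rewrite /Ldeg.
have /permP <- : perm_eq c (Lverts m n k l).
  by apply: uniq_perm; rewrite ?Lverts_uniq // => w; rewrite Lverts_mem Mc.
by apply: (cycle_count_adj sg_adj_sym Cc Sc); rewrite Mc.
Qed.

Lemma Ldeg_unique_nbr m n k l v w : inL m n k l w ->
  (forall u, inL m n k l u -> sg_adj v u = (u == w)) -> Ldeg m n k l v = 1.
Proof.
move=> Lw nbr; rewrite /Ldeg (eq_in_count (a2 := pred1 w)).
  by rewrite count_uniq_mem ?Lverts_uniq ?Lverts_mem ?Lw.
by move=> u; rewrite Lverts_mem; apply: nbr.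
Qed.

Lemma Ldeg_top_left m n k l : m = k.+1 -> 1 < l < n -> Ldeg m n k l (1, 1) = 1.
Proof.
move=> mk ln; apply: (@Ldeg_unique_nbr _ _ _ _ _ (1, 2)); first by grid_arith.
by move=> [x y]; rewrite /inL /= => Lxy; apply/idP/idP; grid_arith.
Qed.

Lemma Ldeg_bottom_right m n k l : n = l.+1 -> 1 < k < m -> Ldeg m n k l (m, n) = 1.
Proof.
move=> nl km; apply: (@Ldeg_unique_nbr _ _ _ _ _ (m.-1, n)); first by grid_arith.
by move=> [x y]; rewrite /inL /= => Lxy; apply/idP/idP; grid_arith.
Qed.

Unset Implicit Arguments.

Theorem theorem2 (m n k l : nat) :
  1 < m -> 1 < n -> 1 <= k -> 1 <= l -> 1 <= m - k -> 1 <= n - l ->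
  has_ham_cycle m n k l <->
  ~ (exists v : vertex, inL m n k l v /\ Ldeg m n k l v = 1).
Proof.
move=> m1 n1 k0 l0 km ln; split.
  by case=> c Hc [v [Lv deg1]]; move: (Ldeg_ham_cycle Hc Lv); rewrite deg1.
move=> no_deg1; have [c Hc _] : good_ham m n k l.
  apply: good_ham_all; try lia; move=> corner.
    case: (leqP l 1) => [|l2]; first lia.
    by case: no_deg1; exists (1, 1); split; [grid_arith|apply: Ldeg_top_left; lia].
  case: (leqP k 1) => [|k2]; first lia.
  by case: no_deg1; exists (m, n); split; [grid_arith|apply: Ldeg_bottom_right; lia].
by exists c.
Qed.
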